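(* There is a function $f(n)=2^{p(n)}$, with $p$ a fixed polynomial, such that every satisfiable $\mathrm{GF}^2{+}\mathrm{EG}$ sentence $\varphi$ that does not use the equality symbol has a finite model of size at most $f(|\varphi|)$.
   Context: Formulas use only variables $x,y$. The two-variable guarded fragment $\mathrm{GF}^2$ is the least set of formulas containing the atomic formulas, closed under Boolean connectives, and closed under $\forall u(p\rightarrow\phi)$ and $\exists u(p\wedge\phi)$ where $p$ (the guard) is an atom containing all free variables of $\phi$ and $u\in\{x,y\}$ is free in $p$. $\mathrm{GF}^2{+}\mathrm{EG}$ (equivalence guards) is $\mathrm{GF}^2$ over a signature with a distinguished set of binary ''special'' symbols which may occur only in guards and which must be interpreted as equivalence relations; any number of special symbols is allowed. Satisfiable means having a (possibly infinite) model with the special symbols interpreted as equivalences. $|\varphi|$ denotes the length of $\varphi$. *)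

From Stdlib Require Import List.
From mathcomp Require Import all_boot all_algebra.
Set Implicit Arguments. Unset Strict Implicit. Unset Printing Implicit Defensive.

Inductive var := VX | VY.

Definition var_eqb (u v : var) : bool :=
  match u, v with VX, VX | VY, VY => true | _, _ => false end.

(* Ordinary atoms: R(v1,...,vk) for a relation symbol named by a nat
   (its arity is the length of the argument list), or an equality u = v.
   Special (equivalence) symbols are NOT ordinary atoms: they can only occur
   in guards. *)
Inductive gatom :=
  | ARel of nat & seq var
  | AEq of var & var.

Inductive gguard :=
  | GAtom of gatom
  | GSpec of nat & var & var.

Inductive gform :=
  | FAtom of gatom
  | FNeg of gform
  | FAnd of gform & gform
  | FOr of gform & gform
  | FAll of var & gguard & gform   (* forall u (g -> phi) *)
  | FEx of var & gguard & gform.   (* exists u (g /\ phi) *)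

Definition atom_has (v : var) (a : gatom) : Prop :=
  match a with
  | ARel _ args => In v args
  | AEq u w => v = u \/ v = w
  end.

Definition guard_has (v : var) (g : gguard) : Prop :=
  match g with
  | GAtom a => atom_has v a
  | GSpec _ u w => v = u \/ v = w
  end.

Fixpoint fv (f : gform) (v : var) : Prop :=
  match f with
  | FAtom a => atom_has v a
  | FNeg f1 => fv f1 v
  | FAnd f1 f2 | FOr f1 f2 => fv f1 v \/ fv f2 v
  | FAll u g f1 | FEx u g f1 => v <> u /\ (guard_has v g \/ fv f1 v)
  end.

Fixpoint guarded (f : gform) : Prop :=
  match f with
  | FAtom _ => True
  | FNeg f1 => guarded f1
  | FAnd f1 f2 | FOr f1 f2 => guarded f1 /\ guarded f2
  | FAll u g f1 | FEx u g f1 =>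
      guarded f1 /\ guard_has u g /\ (forall v, fv f1 v -> guard_has v g)
  end.

Definition gsentence (f : gform) : Prop := guarded f /\ forall v, ~ fv f v.

Definition atom_eqfree (a : gatom) : bool :=
  match a with ARel _ _ => true | AEq _ _ => false end.

Definition guard_eqfree (g : gguard) : bool :=
  match g with GAtom a => atom_eqfree a | GSpec _ _ _ => true end.

Fixpoint eqfree (f : gform) : bool :=
  match f with
  | FAtom a => atom_eqfree a
  | FNeg f1 => eqfree f1
  | FAnd f1 f2 | FOr f1 f2 => eqfree f1 && eqfree f2
  | FAll _ g f1 | FEx _ g f1 => guard_eqfree g && eqfree f1
  end.

Definition atom_len (a : gatom) : nat :=
  match a with ARel _ args => (size args).+1 | AEq _ _ => 3 end.

Definition guard_len (g : gguard) : nat :=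
  match g with GAtom a => atom_len a | GSpec _ _ _ => 3 end.

Fixpoint flen (f : gform) : nat :=
  match f with
  | FAtom a => atom_len a
  | FNeg f1 => (flen f1).+1
  | FAnd f1 f2 | FOr f1 f2 => (flen f1 + flen f2).+1
  | FAll _ g f1 | FEx _ g f1 => (guard_len g + flen f1).+2
  end.

Record gstructure (D : Type) := Structure {
  srel : nat -> seq D -> Prop;
  sspec : nat -> D -> D -> Prop;
  sspec_refl : forall e x, sspec e x x;
  sspec_sym : forall e x y, sspec e x y -> sspec e y x;
  sspec_trans : forall e x y z, sspec e x y -> sspec e y z -> sspec e x z
}.

Definition upd (D : Type) (a : var -> D) (u : var) (d : D) : var -> D :=
  fun v => if var_eqb v u then d else a v.

Definition eval_atom (D : Type) (M : gstructure D) (a : var -> D) (t : gatom) : Prop :=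
  match t with
  | ARel s args => srel M s (map a args)
  | AEq u v => a u = a v
  end.

Definition eval_guard (D : Type) (M : gstructure D) (a : var -> D) (g : gguard) : Prop :=
  match g with
  | GAtom t => eval_atom M a t
  | GSpec e u v => sspec M e (a u) (a v)
  end.

Fixpoint gholds (D : Type) (M : gstructure D) (a : var -> D) (f : gform) : Prop :=
  match f with
  | FAtom t => eval_atom M a t
  | FNeg f1 => ~ gholds M a f1
  | FAnd f1 f2 => gholds M a f1 /\ gholds M a f2
  | FOr f1 f2 => gholds M a f1 \/ gholds M a f2
  | FAll u g f1 => forall d : D,
      eval_guard M (upd a u d) g -> gholds M (upd a u d) f1
  | FEx u g f1 => exists d : D,
      eval_guard M (upd a u d) g /\ gholds M (upd a u d) f1
  end.

Definition satisfiable (f : gform) : Prop :=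
  exists (D : Type) (M : gstructure D) (a : var -> D), gholds M a f.

Definition has_model_of_size (f : gform) (n : nat) : Prop :=
  0 < n /\ exists (M : gstructure 'I_n) (a : var -> 'I_n), gholds M a f.

(* What a guarded two-variable sentence sees of a model is the 1-types of
   its elements (the subformulas they satisfy) and the 2-types of the pairs
   joined by a guard.  The small model is made of nodes, each copying a
   realized 1-type; a pair of nodes is linked, if at all, to a pair of the
   original model whose 2-type it copies, and then every subformula holds
   alike on both pairs.  The witnesses a node needs are created in the next
   of three layers, so that no pair of nodes is asked to copy two different
   pairs.  A node is a vector with one coordinate per special symbol [E_i]
   plus one, and nodes that differ only in coordinate [i] and name the same
   [E_i]-class of the original model form an [E_i]-class.  Since equality is
   absent, distinct nodes may copy the same element.  There are
   (#labels)^(#special symbols + 1) nodes with #labels = 2^O(|phi|^2),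
   hence 2^O(|phi|^3) in all. *)

From Stdlib Require Import List ClassicalEpsilon.
From mathcomp Require Import all_boot all_algebra zify boolp.
Set Implicit Arguments. Unset Strict Implicit. Unset Printing Implicit Defensive.

Arguments incl_cons_inv {A a l m}.
Arguments incl_app_inv {A l1 l2 m}.

Definition asgxy (D : Type) (p q : D) (v : var) : D := if v is VX then p else q.

Definition other (v : var) : var := if v is VX then VY else VX.

Lemma neq_other v w : v <> w -> v = other w.
Proof. by case: v; case: w. Qed.

(* The assignment under which the body of [FAll w _ _] or [FEx w _ _] is
   evaluated when the free variable holds [p] and [w] is sent to [q]. *)
Definition qasg (D : Type) (w : var) (p q : D) : var -> D := upd (asgxy p p) w q.

Lemma qasg_split (D : Type) w (b : var -> D) v : qasg w (b (other w)) (b w) v = b v.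
Proof. by case: w; case: v. Qed.

Lemma qasg_other (D : Type) w (p q : D) : qasg w p q (other w) = p.
Proof. by case: w. Qed.

Lemma qasg_unary (D : Type) w g (p q : D) v :
  ~ guard_has (other w) g -> guard_has v g -> qasg w p q v = asgxy q q v.
Proof. by case: w; case: v. Qed.

Lemma eq_map_In (A B : Type) (f g : A -> B) (s : seq A) :
  (forall x, In x s -> f x = g x) -> map f s = map g s.
Proof. by elim: s => //= x s IH fg; rewrite fg ?IH //; [move=> y sy; apply: fg; right | left]. Qed.

Lemma map_const_In (A B : Type) (f : A -> B) c (s : seq A) :
  (forall x, In x s -> f x = c) -> map f s = nseq (size s) c.
Proof. by elim: s => //= x s IH fc; rewrite fc ?IH //; [move=> y sy; apply: fc; right | left]. Qed.

Lemma mem_map_In (T : eqType) (f : var -> T) v vs : In v vs -> f v \in map f vs.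
Proof. by elim: vs => //= v' vs IH; rewrite inE => -[->|/IH ->]; rewrite ?eqxx ?orbT. Qed.

Lemma map_var_sub (T : eqType) (f : var -> T) vs : {subset map f vs <= [:: f VX; f VY]}.
Proof.
elim: vs => //= v vs IH z; rewrite inE => /orP [/eqP ->|/IH //].
by case: v; rewrite !inE eqxx ?orbT.
Qed.

Lemma In_nth_index (A : Type) (x0 : A) (s : seq A) x :
  In x s -> exists2 i, i < size s & nth x0 s i = x.
Proof.
elim: s => //= y s IH [<-|/IH [i lt_i <-]]; first by exists 0.
by exists i.+1.
Qed.

Lemma map_asgxy_diag (D : Type) (x : D) vs : map (asgxy x x) vs = nseq (size vs) x.
Proof. by elim: vs => //= v vs ->; case: v. Qed.

Lemma eval_spec_qasg (D : Type) (M : gstructure D) w e x y {p q : D} :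
  guard_has w (GSpec e x y) -> guard_has (other w) (GSpec e x y) ->
  eval_guard M (qasg w p q) (GSpec e x y) <-> sspec M e p q.
Proof.
case: w x y => -[] -[] /= [] // _ [] // _.
all: by rewrite /qasg /=; split; apply: sspec_sym.
Qed.

Section Coincidence.
Variables (D : Type) (M : gstructure D).

Lemma eval_atom_coinc t (a b : var -> D) :
  (forall v, atom_has v t -> a v = b v) -> eval_atom M a t <-> eval_atom M b t.
Proof.
case: t => [s args|u v] /= ab; first by rewrite (eq_map_In ab).
by rewrite (ab u (or_introl erefl)) (ab v (or_intror erefl)).
Qed.

Lemma eval_guard_coinc g (a b : var -> D) :
  (forall v, guard_has v g -> a v = b v) -> eval_guard M a g <-> eval_guard M b g.
Proof.
case: g => [t|e u v] /= ab; first exact: eval_atom_coinc.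
by rewrite (ab u (or_introl erefl)) (ab v (or_intror erefl)).
Qed.

Lemma upd_agree (P : var -> Prop) (a b : var -> D) u d :
  (forall v, v <> u -> P v -> a v = b v) -> forall v, P v -> upd a u d v = upd b u d v.
Proof.
move=> ab v Pv; rewrite /upd; case E: (var_eqb v u) => //.
by apply: ab Pv; case: u v E => -[].
Qed.

Lemma gholds_coinc f : forall a b : var -> D,
  (forall v, fv f v -> a v = b v) -> gholds M a f <-> gholds M b f.
Proof.
elim: f => [t|f IH|f1 IH1 f2 IH2|f1 IH1 f2 IH2|u g f IH|u g f IH] a b ab /=.
- exact: eval_atom_coinc.
- by rewrite (IH a b).
- by rewrite (IH1 a b) ?(IH2 a b) // => v fv_v; apply: ab; [right|left].
- by rewrite (IH1 a b) ?(IH2 a b) // => v fv_v; apply: ab; [right|left].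
all: have ab' d := upd_agree d (fun v vu Pv => ab v (conj vu Pv)).
all: have Eg d := eval_guard_coinc (fun v gv => ab' d v (or_introl gv)).
all: have Ef d := IH _ _ (fun v fv_v => ab' d v (or_intror fv_v)).
- by split=> H d /Eg /H /Ef.
- by split=> -[d [/Eg g_d /Ef f_d]]; exists d.
Qed.

Lemma gholds_const f o (a : var -> D) :
  (forall v, fv f v -> v = o) -> gholds M a f <-> gholds M (asgxy (a o) (a o)) f.
Proof. by move=> fv_o; apply: gholds_coinc => v /fv_o ->; case: (o). Qed.

End Coincidence.

Section Pullback.
Variables (D D' : Type) (f : D' -> D) (M : gstructure D).

Definition pullback : gstructure D' :=
  @Structure D' (fun s L => srel M s (map f L)) (fun e x y => sspec M e (f x) (f y))
    (fun e x => sspec_refl M e (f x)) (fun e x y => @sspec_sym _ M e (f x) (f y))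
    (fun e x y z => @sspec_trans _ M e (f x) (f y) (f z)).

Hypothesis f_bij : bijective f.

Lemma eval_guard_pullback g (a : var -> D') :
  eval_guard pullback a g <-> eval_guard M (f \o a) g.
Proof.
case: g => [[s args|u v]|//] /=; first by rewrite map_comp.
by split=> [->|/(bij_inj f_bij)].
Qed.

Lemma gholds_pullback phi : forall a, gholds pullback a phi <-> gholds M (f \o a) phi.
Proof.
have [f' _ ff'] := f_bij.
elim: phi => [t|g IH|g1 IH1 g2 IH2|g1 IH1 g2 IH2|u g psi IH|u g psi IH] a /=.
- exact: (eval_guard_pullback (GAtom t)).
- by rewrite IH.
- by rewrite IH1 IH2.
- by rewrite IH1 IH2.
all: have upd_f d : f \o upd a u d =1 upd (f \o a) u (f d)
  by move=> v; rewrite /upd /=; case: var_eqb.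
all: have Eg d : eval_guard pullback (upd a u d) g <-> eval_guard M (upd (f \o a) u (f d)) g
  by rewrite eval_guard_pullback; apply: eval_guard_coinc => v _; apply: upd_f.
all: have Ef d : gholds pullback (upd a u d) psi <-> gholds M (upd (f \o a) u (f d)) psi
  by rewrite IH; apply: gholds_coinc => v _; apply: upd_f.
- split=> H d; last by move/Eg/H/Ef.
  by rewrite -(ff' d) => /Eg/H/Ef.
- split=> [[d [/Eg g_d /Ef psi_d]]|[d [g_d psi_d]]]; first by exists (f d).
  by exists (f' d); split; [apply/Eg | apply/Ef]; rewrite ff'.
Qed.

End Pullback.

Lemma has_model_of_size_card (F : finType) (N : gstructure F) phi (a : var -> F) :
  gholds N a phi -> has_model_of_size phi #|F|.
Proof.
move=> Na; split; first by apply/card_gt0P; exists (a VX).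
exists (pullback enum_val N), (enum_rank \o a).
apply/(gholds_pullback _ (enum_val_bij F)).
suff a_rank v : fv phi v -> a v = (enum_val \o (enum_rank \o a)) v.
  by apply (gholds_coinc N a_rank).
by rewrite /= enum_rankK.
Qed.

Definition guard_subforms (g : gguard) : seq gform :=
  if g is GAtom t then [:: FAtom t] else [::].

Fixpoint subforms (f : gform) : seq gform :=
  f :: match f with
       | FAtom _ => [::]
       | FNeg f1 => subforms f1
       | FAnd f1 f2 | FOr f1 f2 => subforms f1 ++ subforms f2
       | FAll _ g f1 | FEx _ g f1 => guard_subforms g ++ subforms f1
       end.

Lemma subforms_self f : In f (subforms f).
Proof. by case: f => *; left. Qed.

Lemma size_subforms_gt0 f : 0 < size (subforms f).
Proof. by case: f. Qed.

Definition guard_specs (g : gguard) : seq nat :=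
  if g is GSpec e _ _ then [:: e] else [::].

Fixpoint specs (f : gform) : seq nat :=
  match f with
  | FAtom _ => [::]
  | FNeg f1 => specs f1
  | FAnd f1 f2 | FOr f1 f2 => specs f1 ++ specs f2
  | FAll _ g f1 | FEx _ g f1 => guard_specs g ++ specs f1
  end.

Lemma specs_subforms f g : In g (subforms f) -> {subset specs g <= specs f}.
Proof.
elim: f => [t|f1 IH|f1 IH1 f2 IH2|f1 IH1 f2 IH2|u G f1 IH|u G f1 IH] /= [<- //|].
- by [].
- exact: IH.
- by move=> /in_app_iff [/IH1|/IH2] sub n /sub; rewrite mem_cat => ->; rewrite ?orbT.
- by move=> /in_app_iff [/IH1|/IH2] sub n /sub; rewrite mem_cat => ->; rewrite ?orbT.
- move=> /in_app_iff [|/IH sub n /sub]; last by rewrite mem_cat => ->; rewrite orbT.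
  by case: G => [t [<-|]|] //.
- move=> /in_app_iff [|/IH sub n /sub]; last by rewrite mem_cat => ->; rewrite orbT.
  by case: G => [t [<-|]|] //.
Qed.

Lemma size_subforms f : size (subforms f) <= flen f.
Proof.
have gsize g : size (guard_subforms g) <= guard_len g by case: g => [[]|].
elim: f => [[]|f IH|f1 IH1 f2 IH2|f1 IH1 f2 IH2|u G f IH|u G f IH] //=;
  rewrite ?size_cat; try have := gsize G; lia.
Qed.

Lemma size_specs f : size (specs f) <= flen f.
Proof.
have gsize g : size (guard_specs g) <= guard_len g by case: g => [[]|].
elim: f => [[]|f IH|f1 IH1 f2 IH2|f1 IH1 f2 IH2|u G f IH|u G f IH] //=;
  rewrite ?size_cat; try have := gsize G; lia.
Qed.

Definition qguard (Q : gform) : option (var * gguard) :=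
  match Q with FAll w g _ | FEx w g _ => Some (w, g) | _ => None end.

Lemma qguard_specs Q w e x y : qguard Q = Some (w, GSpec e x y) -> e \in specs Q.
Proof. by case: Q => // ? ? ? [_ ->]; rewrite mem_head. Qed.

Definition qbody (D : Type) (M : gstructure D) (Q : gform) (a : var -> D) : Prop :=
  match Q with
  | FEx _ _ psi => gholds M a psi
  | FAll _ _ psi => ~ gholds M a psi
  | _ => False
  end.

(* [e] witnesses the existential [Q] at [d], or refutes the universal [Q] at [d]. *)
Definition qwitness (D : Type) (M : gstructure D) (Q : gform) (d e : D) : Prop :=
  if qguard Q is Some (w, g) then eval_guard M (qasg w d e) g /\ qbody M Q (qasg w d e)
  else False.

Lemma qwitness_guard (D : Type) (M : gstructure D) Q w g d e :
  qguard Q = Some (w, g) -> qwitness M Q d e -> eval_guard M (qasg w d e) g.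
Proof. by rewrite /qwitness => ->; case. Qed.

Lemma gholds_FAll_diag (D : Type) (M : gstructure D) w g psi d :
  gholds M (asgxy d d) (FAll w g psi) <-> ~ exists e, qwitness M (FAll w g psi) d e.
Proof.
split=> [H [e [ge psie]]|H e ge]; first exact/psie/H.
by apply: contrapT => psie; apply: H; exists e.
Qed.

Lemma gholds_diag_qwitness {X Y : Type} {K : gstructure X} {L : gstructure Y} {Q} {x : X} {y : Y} :
  qguard Q <> None ->
  (gholds K (asgxy x x) Q <-> gholds L (asgxy y y) Q) <->
  ((exists e, qwitness K Q x e) <-> (exists e, qwitness L Q y e)).
Proof.
case: Q => // w g psi _.
rewrite !gholds_FAll_diag.
by split=> E; split=> H; apply: contrapT; tauto.
Qed.

(* [link u v = Some (d, e)]: the pair [(u, v)] of [N] copies the pair [(d, e)]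
   of [M].  Under the hypotheses below, every formula of the subformula-closed
   list [Sig] holds alike on linked pairs. *)
Section Transfer.
Variables (D F : Type) (M : gstructure D) (N : gstructure F) (Sig : seq gform).
Variables (origin : F -> D) (link : F -> F -> option (D * D)).

Definition same_type (d d' : D) : Prop :=
  forall chi, In chi Sig -> gholds M (asgxy d d) chi <-> gholds M (asgxy d' d') chi.

Definition linked (a : var -> F) (b : var -> D) : Prop :=
  link (a VX) (a VY) = Some (b VX, b VY).

Hypothesis link_refl : forall u, link u u = Some (origin u, origin u).
Hypothesis link_same_type : forall u v d e, link u v = Some (d, e) ->
  same_type d (origin u) /\ same_type e (origin v).
Hypothesis link_swap : forall u v, link v u = omap swap_pair (link u v).
Hypothesis link_rel : forall s args a b, In (FAtom (ARel s args)) Sig -> linked a b ->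
  srel N s (map a args) <-> srel M s (map b args).
Hypothesis rel_linked : forall s args a, In VX args -> In VY args ->
  srel N s (map a args) -> exists b, linked a b.
Hypothesis spec_linked : forall e u v, sspec N e u v ->
  exists d d', link u v = Some (d, d') /\ sspec M e d d'.
Hypothesis link_witness : forall u Q w g, In Q Sig -> qguard Q = Some (w, g) ->
  guard_eqfree g -> guard_has w g -> guard_has (other w) g ->
  incl (guard_subforms g) Sig -> (exists e, qwitness M Q (origin u) e) ->
  exists v d e, link u v = Some (d, e) /\ qwitness M Q d e /\ eval_guard N (qasg w u v) g.
Hypothesis type_realized : forall d, exists u, same_type (origin u) d.

Lemma linked_diag u : linked (asgxy u u) (asgxy (origin u) (origin u)).
Proof. exact: link_refl. Qed.

Lemma linked_same_type a b v : linked a b -> same_type (b v) (origin (a v)).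
Proof. by case/link_same_type; case: v. Qed.

Lemma linked_qasg w u v d e : link u v = Some (d, e) -> linked (qasg w u v) (qasg w d e).
Proof. by case: w => uv; rewrite /linked /=; [rewrite link_swap uv | rewrite uv]. Qed.

Lemma guard_linked g w a : guard_eqfree g -> guard_has w g -> guard_has (other w) g ->
  incl (guard_subforms g) Sig -> eval_guard N a g -> exists b, linked a b /\ eval_guard M b g.
Proof.
case: g => [[s args|//]|e x y] /= _ g_w g_o g_sub.
- move=> Na; have [b ab] : exists b, linked a b by apply: rel_linked Na; case: w g_w g_o.
  by exists b; split=> //; apply/(link_rel (g_sub _ (or_introl erefl)) ab).
- have [[-> ->]|[-> ->]] : (x = VX /\ y = VY) \/ (x = VY /\ y = VX).
    by move: g_w g_o; case: w; case: x; case: y => /=; intuition discriminate.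
  + move=> Na; have [d [d' [ad Md]]] := spec_linked Na.
    by exists (asgxy d d').
  + move=> Na; have [d [d' [ad Md]]] := spec_linked (sspec_sym Na).
    by exists (asgxy d d'); split; last exact: sspec_sym.
Qed.

Lemma guard_diag g u : guard_eqfree g -> incl (guard_subforms g) Sig ->
  eval_guard N (asgxy u u) g <-> eval_guard M (asgxy (origin u) (origin u)) g.
Proof.
case: g => [[s args|//]|e x y] /= _ g_sub.
  exact: link_rel (g_sub _ (or_introl erefl)) (linked_diag u).
by case: x; case: y; split=> _; apply: sspec_refl.
Qed.

Lemma guard_same_type g d d' : incl (guard_subforms g) Sig -> same_type d d' ->
  eval_guard M (asgxy d d) g <-> eval_guard M (asgxy d' d') g.
Proof.
case: g => [t|e x y] /= g_sub dd'; first exact: (dd' (FAtom t) (g_sub _ (or_introl erefl))).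
by case: x; case: y; split=> _; apply: sspec_refl.
Qed.

Section Quantifier.
Variables (Q : gform) (w : var) (g : gguard).
Hypotheses (Q_in : In Q Sig) (Q_guard : qguard Q = Some (w, g)).
Hypotheses (g_eqfree : guard_eqfree g) (g_w : guard_has w g).
Hypothesis g_sub : incl (guard_subforms g) Sig.
Hypothesis body_local : forall (X : Type) (K : gstructure X) a a',
  (forall v, guard_has v g -> a v = a' v) -> qbody K Q a <-> qbody K Q a'.
Hypothesis body_linked : forall a b, linked a b -> qbody N Q a <-> qbody M Q b.
Hypothesis body_same_type : forall d d', same_type d d' ->
  qbody M Q (asgxy d d) <-> qbody M Q (asgxy d' d').

Lemma qwitnessE (X : Type) (K : gstructure X) p q :
  qwitness K Q p q <-> eval_guard K (qasg w p q) g /\ qbody K Q (qasg w p q).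
Proof. by rewrite /qwitness Q_guard. Qed.

Lemma qwitness_unary (X : Type) (K : gstructure X) p q : ~ guard_has (other w) g ->
  qwitness K Q p q <-> eval_guard K (asgxy q q) g /\ qbody K Q (asgxy q q).
Proof.
move=> g_o; have pq v : guard_has v g -> qasg w p q v = asgxy q q v by exact: qasg_unary.
by rewrite qwitnessE (eval_guard_coinc _ pq) (body_local _ pq).
Qed.

Lemma qwitness_to_M u v : qwitness N Q u v ->
  exists d e, same_type d (origin u) /\ qwitness M Q d e.
Proof.
have [g_o|g_o] := pselect (guard_has (other w) g).
- rewrite qwitnessE => -[/(guard_linked g_eqfree g_w g_o g_sub) [b [ab Mg]] Nbody].
  exists (b (other w)), (b w); split.
    by have := linked_same_type (other w) ab; rewrite qasg_other.
  have b_split v' : guard_has v' g -> qasg w (b (other w)) (b w) v' = b v'.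
    by move=> _; apply: qasg_split.
  rewrite qwitnessE (eval_guard_coinc _ b_split) (body_local _ b_split).
  by split=> //; apply/(body_linked ab).
- rewrite qwitness_unary // => -[Ng Nbody].
  exists (origin u), (origin v); split; first by [].
  rewrite qwitness_unary //; split; first exact/(guard_diag _ g_eqfree g_sub).
  exact/(body_linked (linked_diag v)).
Qed.

Lemma qwitness_to_N u : (exists e, qwitness M Q (origin u) e) -> exists v, qwitness N Q u v.
Proof.
have [g_o|g_o] := pselect (guard_has (other w) g) => ex_e.
- have [v [d [e [uv [Mde Ng]]]]] := link_witness Q_in Q_guard g_eqfree g_w g_o g_sub ex_e.
  exists v; move: Mde; rewrite !qwitnessE => -[_ Mbody]; split=> //.
  exact/(body_linked (linked_qasg w uv)).
- case: ex_e => e; rewrite qwitness_unary // => -[Mg Mbody].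
  have [v ve] := type_realized e.
  exists v; rewrite qwitness_unary //; split.
  + exact/(guard_diag _ g_eqfree g_sub)/(guard_same_type g_sub ve).
  + exact/(body_linked (linked_diag v))/(body_same_type ve).
Qed.

Lemma gholds_quant_diag u : gholds N (asgxy u u) Q <-> gholds M (asgxy (origin u) (origin u)) Q.
Proof.
have Q_quant : qguard Q <> None by rewrite Q_guard.
apply: (gholds_diag_qwitness Q_quant).2.
split=> [[v /qwitness_to_M [d [e [du de]]]]|/qwitness_to_N //].
by apply: ((gholds_diag_qwitness Q_quant).1 (du Q Q_in)).1; exists e.
Qed.

End Quantifier.

Lemma gholds_transfer_of_diag Q o a b : In Q Sig -> (forall v, fv Q v -> v = o) ->
  (forall u, gholds N (asgxy u u) Q <-> gholds M (asgxy (origin u) (origin u)) Q) ->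
  linked a b -> gholds N a Q <-> gholds M b Q.
Proof.
move=> Q_in Q_fv Q_diag ab.
rewrite (gholds_const _ _ Q_fv) Q_diag -(linked_same_type o ab Q_in).
by rewrite -(gholds_const _ _ Q_fv).
Qed.

Theorem gholds_transfer chi : guarded chi -> eqfree chi -> incl (subforms chi) Sig ->
  forall a b, linked a b -> gholds N a chi <-> gholds M b chi.
Proof.
elim: chi => [[s args|//]|f IH|f1 IH1 f2 IH2|f1 IH1 f2 IH2|w g psi IH|w g psi IH] /=
  chi_g chi_eq /incl_cons_inv [chi_in chi_sub] a b ab.
- exact: link_rel chi_in ab.
- by rewrite (IH chi_g chi_eq chi_sub a b ab).
- case/andP: chi_eq => eq1 eq2; case/incl_app_inv: chi_sub => sub1 sub2.
  by rewrite (IH1 chi_g.1 eq1 sub1 a b ab) (IH2 chi_g.2 eq2 sub2 a b ab).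
- case/andP: chi_eq => eq1 eq2; case/incl_app_inv: chi_sub => sub1 sub2.
  by rewrite (IH1 chi_g.1 eq1 sub1 a b ab) (IH2 chi_g.2 eq2 sub2 a b ab).
all: case/andP: chi_eq => g_eqfree psi_eqfree; case: chi_g => [psi_g [g_w psi_fv]].
all: case/incl_app_inv: chi_sub => g_sub psi_sub.
all: have psi_in : In psi Sig := psi_sub psi (subforms_self psi).
all: have IHpsi := IH psi_g psi_eqfree psi_sub.
all: apply: (gholds_transfer_of_diag (o := other w) chi_in _ _ ab) => [v [/neq_other //]|u].
all: apply: (gholds_quant_diag chi_in erefl g_eqfree g_w g_sub) => /=
  [X K a' a'' aa|a' b' ab'|d d' dd'];
  [have := gholds_coinc K (fun v fv_v => aa v (psi_fv v fv_v))
  |have := IHpsi a' b' ab'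
  |have := dd' psi psi_in]; tauto.
Qed.

End Transfer.






Lemma exists_ffun_sum_mod (I : finType) m (u : {ffun I -> 'I_m}) (c : I) (t : 'I_m) :
  exists2 v : {ffun I -> 'I_m},
    (forall c', c' != c -> v c' = u c') & (\sum_i (v i : nat)) %% m = t.
Proof.
have m_gt0 : 0 < m by apply: leq_ltn_trans (ltn_ord t).
set r := \sum_(i | i != c) (u i : nat).
have lt_new : (t + m - r %% m) %% m < m by rewrite ltn_pmod.
exists [ffun i => if i == c then Ordinal lt_new else u i] => [c' /negbTE c'c|].
  by rewrite ffunE c'c.
rewrite (bigD1 c) //= ffunE eqxx /=.
rewrite (eq_bigr (fun i => (u i : nat))) => [|i /negbTE ic]; last by rewrite ffunE ic.
rewrite -/r modnDml {2}(divn_eq r m) [_ * m + _]addnC addnA subnK; last first.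
  by rewrite (leq_trans (ltnW (ltn_pmod r m_gt0))) ?leq_addl.
by rewrite addnC modnMDl modnDr modn_small.
Qed.

Lemma neq_ordS3 (a : 'I_3) : (a == ordS a) = false.
Proof. by case: a => -[|[|[|?]]] ?. Qed.

Lemma ordS3_asym (a b : 'I_3) : b == ordS a -> (a == ordS b) = false.
Proof. by case: a b => -[|[|[|?]]] ? [[|[|[|?]]] ?]. Qed.

Lemma label_count_bound K k L : K <= L -> k <= L ->
  (2 ^ K * 3 * K * (2 ^ K) ^ k) ^ k.+1 <= 2 ^ ((L + 2) ^ 3).
Proof.
move=> KL kL.
have base : 2 ^ K * 3 * K * (2 ^ K) ^ k <= 2 ^ ((L + 2) ^ 2).
  apply: (@leq_trans (2 ^ (K + (K + 2) + K * k))); last first.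
    by rewrite leq_exp2l // !expnS expn0 !muln1; nia.
  rewrite !expnD expnM -(mulnA _ 3) leq_mul // leq_mul //.
  by have := ltn_expl K (isT : 1 < 2); rewrite expnS expn1; lia.
rewrite -(leq_exp2r _ _ (ltn0Sn k)) in base; apply: leq_trans base _.
by rewrite -expnM leq_exp2l // !expnS expn0 !muln1; nia.
Qed.

Section SmallModel.
Variables (D : Type) (M : gstructure D) (d0 : D) (phi : gform).

Definition sf := subforms phi.
Definition nsf := size sf.
Definition sp := specs phi.
Definition nsp := size sp.

Definition type1 := {ffun 'I_nsf -> bool}.

Definition type_of (d : D) : type1 :=
  [ffun i : 'I_nsf => `[< gholds M (asgxy d d) (nth phi sf i) >]].

Definition realized (t : type1) : bool := `[< exists d, type_of d = t >].

Definition type_rep (t : type1) : D := epsilon (inhabits d0) (fun d => type_of d = t).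

(* The [E_i]-class of [M] named by the type [c] is the class of [type_rep c]. *)
Definition in_class (i : nat) (c t : type1) (x : D) : Prop :=
  sspec M (nth 0 sp i) (type_rep c) x /\ type_of x = t.

Definition class_has (i : nat) (c t : type1) : bool := `[< exists x, in_class i c t x >].

Definition class_rep (i : nat) (c t : type1) : D := epsilon (inhabits d0) (in_class i c t).

Lemma same_type_of d d' : type_of d = type_of d' -> same_type M sf d d'.
Proof.
move=> dd' chi /(In_nth_index phi) [i lt_i <-].
have /ffunP/(_ (Ordinal lt_i)) := dd'; rewrite !ffunE.
exact: asbool_eq_equiv.
Qed.

Lemma realized_type_of d : realized (type_of d).
Proof. by apply/asboolP; exists d. Qed.

Lemma type_repK t : realized t -> type_of (type_rep t) = t.
Proof. by move/asboolP; apply: epsilon_spec. Qed.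

Lemma class_repP i c t : class_has i c t -> in_class i c t (class_rep i c t).
Proof. by move/asboolP; apply: epsilon_spec. Qed.

Lemma class_has_self i d : class_has i (type_of d) (type_of d).
Proof.
apply/asboolP; exists (type_rep (type_of d)); split; first exact: sspec_refl.
by rewrite type_repK ?realized_type_of.
Qed.

(* A label: a type, a layer, the index of the subformula that the node
   witnesses for its predecessor, and for every special symbol [E_i] a type
   naming an [E_i]-class of [M] that contains the node's own type. *)
Definition label := (type1 * 'I_3 * 'I_nsf * nsp.-tuple type1)%type.

Definition admissible (l : label) : bool :=
  [&& realized l.1.1.1, all realized l.2 & [forall i : 'I_nsp, class_has i (tnth l.2 i) l.1.1.1]].

Definition alabel := {l : label | admissible l}.

Definition const_label (d : D) (lay : 'I_3) (j : 'I_nsf) : label :=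
  (type_of d, lay, j, [tuple type_of d | _ < nsp]).

Lemma const_label_admissible d lay j : admissible (const_label d lay j).
Proof.
rewrite /admissible /= realized_type_of /=; apply/andP; split.
  by apply/allP => t /mapP [i _ ->]; apply: realized_type_of.
by apply/forallP => i; rewrite tnth_mktuple class_has_self.
Qed.

Definition nlabels := #|{: alabel}|.

Lemma nlabels_gt0 : 0 < nlabels.
Proof.
apply/card_gt0P.
by exists (Sub _ (const_label_admissible d0 ord0 (Ordinal (size_subforms_gt0 phi)))).
Qed.

(* Nodes are [nsp.+1]-tuples over [Z/nlabels]; the label of a node is read
   off the sum of its coordinates, so that any coordinate can be changed to
   give a node with any prescribed label. *)
Definition node := {ffun 'I_nsp.+1 -> 'I_nlabels}.

Definition label_of (u : node) : label :=
  val (enum_val (Ordinal (ltn_pmod (\sum_c (u c : nat)) nlabels_gt0))).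

Lemma exists_node_label (u : node) (c : 'I_nsp.+1) (l : label) : admissible l ->
  exists2 v : node, (forall c', c' != c -> v c' = u c') & label_of v = l.
Proof.
move=> adm_l; have [v vu sum_v] := exists_ffun_sum_mod u c (enum_rank (Sub l adm_l : alabel)).
exists v => //; rewrite /label_of.
by rewrite (_ : Ordinal _ = enum_rank (Sub l adm_l : alabel)) ?enum_rankK //; apply/val_inj.
Qed.

Lemma admissible_label_of u : admissible (label_of u).
Proof. exact: valP. Qed.

Definition ntype (u : node) : type1 := (label_of u).1.1.1.
Definition layer (u : node) : 'I_3 := (label_of u).1.1.2.
Definition request (u : node) : nat := (label_of u).1.2.
Definition nclass (u : node) (i : nat) : type1 := nth (type_of d0) (label_of u).2 i.
Definition origin (u : node) : D := type_rep (ntype u).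

Lemma type_of_origin u : type_of (origin u) = ntype u.
Proof. by apply: type_repK; have /and3P[] := admissible_label_of u. Qed.

Lemma class_has_nclass u i : i < nsp -> class_has i (nclass u i) (ntype u).
Proof.
move=> lt_i; have /and3P[_ _ /forallP/(_ (Ordinal lt_i))] := admissible_label_of u.
by rewrite (tnth_nth (type_of d0)).
Qed.

(* Nodes sharing an [E_n]-class differ at most in coordinate [n]; hence two
   distinct nodes share at most one class. *)
Definition same_class (n : nat) (u v : node) : bool :=
  [forall c : 'I_nsp.+1, (c != n :> nat) ==> (u c == v c)] && (nclass u n == nclass v n).

Lemma same_class_refl n u : same_class n u u.
Proof. by rewrite /same_class eqxx andbT; apply/forallP => c; rewrite eqxx implybT. Qed.

Lemma same_class_sym n u v : same_class n u v = same_class n v u.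
Proof.
rewrite /same_class [nclass u n == _]eq_sym; congr (_ && _).
by apply: eq_forallb => c; rewrite [u c == _]eq_sym.
Qed.

Lemma same_class_trans n u v w : same_class n u v -> same_class n v w -> same_class n u w.
Proof.
move=> /andP [/forallP uv /eqP cuv] /andP [/forallP vw /eqP cvw].
rewrite /same_class cuv cvw eqxx andbT; apply/forallP => c; apply/implyP => cn.
by rewrite (eqP (implyP (uv c) cn)) (implyP (vw c) cn).
Qed.

Lemma same_class_uniq n n' u v : n != n' -> same_class n u v -> same_class n' u v -> u = v.
Proof.
move=> nn' /andP [/forallP uv _] /andP [/forallP uv' _]; apply/ffunP => c.
have [cn|cn] := eqVneq (c : nat) n; last exact/eqP/(implyP (uv c)).
by apply/eqP/(implyP (uv' c)); rewrite cn.
Qed.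

Definition node_spec (e : nat) (u v : node) : bool :=
  if e \in sp then same_class (index e sp) u v else u == v.

Lemma node_spec_refl e u : node_spec e u u.
Proof. by rewrite /node_spec; case: ifP => _; rewrite ?same_class_refl. Qed.

Lemma node_spec_sym e u v : node_spec e u v -> node_spec e v u.
Proof. by rewrite /node_spec; case: ifP => _; rewrite (same_class_sym, eq_sym). Qed.

Lemma node_spec_trans e u v w : node_spec e u v -> node_spec e v w -> node_spec e u w.
Proof. by rewrite /node_spec; case: ifP => _; [apply: same_class_trans | move=> /eqP ->]. Qed.

Definition req_form (j : nat) : gform := nth phi sf j.

(* The element of [M] playing [u] when [u] asks for a witness of [req_form j]:
   under a special guard [E_e] it must lie in the [E_e]-class named by [u]. *)
Definition anchor (u : node) (j : nat) : D :=
  if qguard (req_form j) is Some (_, GSpec e _ _) then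
    if e \in sp then class_rep (index e sp) (nclass u (index e sp)) (ntype u) else origin u
  else origin u.

Definition witness (u : node) (j : nat) : D :=
  epsilon (inhabits d0) (qwitness M (req_form j) (anchor u j)).

Definition witnessed (u v : node) : bool :=
  let j := request v in
  `[< [/\ qwitness M (req_form j) (anchor u j) (witness u j),
          type_of (witness u j) = ntype v
        & forall i : 'I_nsp, same_class i u v ->
            sspec M (nth 0 sp i) (anchor u j) (witness u j)] >].

Definition class_link (u v : node) : option (D * D) :=
  if [pick i : 'I_nsp | same_class i u v] is Some i then
    Some (class_rep i (nclass u i) (ntype u), class_rep i (nclass u i) (ntype v))
  else None.

Definition layer_link (u v : node) : option (D * D) :=
  if witnessed u v then Some (anchor u (request v), witness u (request v))
  else class_link u v.

(* The witnesses requested by a node live in the next layer (mod 3), so a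
   pair of nodes never carries two witness obligations. *)
Definition link (u v : node) : option (D * D) :=
  if u == v then Some (origin u, origin u)
  else if layer v == ordS (layer u) then layer_link u v
  else if layer u == ordS (layer v) then omap swap_pair (layer_link v u)
  else class_link u v.

Lemma anchor_type u j : type_of (anchor u j) = ntype u.
Proof.
rewrite /anchor; case: (qguard _) => [[_ [t|e x y]]|]; rewrite ?type_of_origin //.
case: ifP => e_sp; last exact: type_of_origin.
have lt_e : index e sp < nsp by rewrite index_mem.
by case: (class_repP (class_has_nclass u lt_e)).
Qed.

Lemma class_link_types u v d e :
  class_link u v = Some (d, e) -> type_of d = ntype u /\ type_of e = ntype v.
Proof.
rewrite /class_link; case: pickP => // i /andP [_ /eqP uv] [<- <-].
split; first by case: (class_repP (class_has_nclass u (ltn_ord i))).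
by rewrite uv; case: (class_repP (class_has_nclass v (ltn_ord i))).
Qed.

Lemma link_types u v d e : link u v = Some (d, e) -> type_of d = ntype u /\ type_of e = ntype v.
Proof.
have layer_types u' v' d' e' : layer_link u' v' = Some (d', e') ->
    type_of d' = ntype u' /\ type_of e' = ntype v'.
  rewrite /layer_link; case: ifP => [/asboolP [_ wv _] [<- <-]|_]; last exact: class_link_types.
  by rewrite anchor_type.
rewrite /link; case: eqP => [<- [<- <-]|_]; first by rewrite type_of_origin.
case: ifP => _; first exact: layer_types.
case: ifP => _; last exact: class_link_types.
by case E: layer_link => [[d' e']|] //= [<- <-]; case: (layer_types _ _ _ _ E).
Qed.

Lemma link_swap u v : link v u = omap swap_pair (link u v).
Proof.
rewrite /link eq_sym; case: eqP => [->|_] //.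
case: ifP => [vu|_]; first by rewrite (ordS3_asym vu); case: layer_link => [[]|].
case: ifP => _ //.
rewrite /class_link (eq_pick (fun i : 'I_nsp => same_class_sym i v u)).
by case: pickP => // i /andP [_ /eqP ->].
Qed.

Lemma class_link_spec u v (i : 'I_nsp) : u != v -> same_class i u v ->
  exists d e, class_link u v = Some (d, e) /\ sspec M (nth 0 sp i) d e.
Proof.
move=> uv iuv; rewrite /class_link; case: pickP => [i' i'uv|/(_ i)]; last by rewrite iuv.
have -> : i' = i.
  apply/val_inj/eqP; apply: contraNT uv => i'i.
  by apply/eqP/(same_class_uniq i'i i'uv iuv).
exists (class_rep i (nclass u i) (ntype u)), (class_rep i (nclass u i) (ntype v)); split=> //.
have [su _] := class_repP (class_has_nclass u (ltn_ord i)).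
have [sv _] : in_class i (nclass u i) (ntype v) (class_rep i (nclass u i) (ntype v)).
  by case/andP: iuv => _ /eqP ->; apply/class_repP/class_has_nclass.
exact: sspec_trans (sspec_sym su) sv.
Qed.

Lemma layer_link_spec u v (i : 'I_nsp) : u != v -> same_class i u v ->
  exists d e, layer_link u v = Some (d, e) /\ sspec M (nth 0 sp i) d e.
Proof.
move=> uv iuv; rewrite /layer_link; case: ifP => [/asboolP [_ _ wi]|_].
  by do 2!eexists; split; [reflexivity | exact: wi].
exact: class_link_spec.
Qed.

Lemma link_spec e u v : node_spec e u v ->
  exists d d', link u v = Some (d, d') /\ sspec M e d d'.
Proof.
have [<- _|uv] := eqVneq u v.
  by exists (origin u), (origin u); rewrite /link eqxx; split; last exact: sspec_refl.
rewrite /node_spec; case: ifP => [e_sp iuv|_]; last by rewrite (negbTE uv).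
have lt_i : index e sp < nsp by rewrite index_mem.
have <- : nth 0 sp (Ordinal lt_i) = e by exact: nth_index.
rewrite /link (negbTE uv); case: ifP => _; first exact: layer_link_spec.
case: ifP => _; last exact: class_link_spec.
rewrite same_class_sym in iuv.
have [d [d' [-> dd']]] := layer_link_spec (i := Ordinal lt_i) (contra_neq esym uv) iuv.
by exists d', d; split; last exact: sspec_sym.
Qed.

Definition pair_fun (p : node) (d e : D) (z : node) : D := if z == p then d else e.

Definition node_rel (s : nat) (L : seq node) : Prop :=
  exists p q d e, link p q = Some (d, e) /\ {subset L <= [:: p; q]} /\
    srel M s (map (pair_fun p d e) L).

Definition node_structure : gstructure node :=
  @Structure node node_rel node_spec node_spec_refl node_spec_sym node_spec_trans.

Lemma pair_cover (p q p' q' : node) (L : seq node) : p != q -> p \in L -> q \in L ->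
  {subset L <= [:: p'; q']} -> (p' = p /\ q' = q) \/ (p' = q /\ q' = p).
Proof.
move=> pq pL qL Lpq; move: (Lpq p pL) (Lpq q qL) pq; rewrite !inE.
by case/orP=> /eqP-> /orP[]/eqP->; rewrite ?eqxx; auto.
Qed.

Lemma node_rel_pair s (p q : node) d e (L : seq node) : p != q -> p \in L -> q \in L ->
  {subset L <= [:: p; q]} -> link p q = Some (d, e) ->
  node_rel s L <-> srel M s (map (pair_fun p d e) L).
Proof.
move=> pq pL qL Lpq pqde.
split=> [[p' [q' [d' [e' [pqde' [Lpq' ML]]]]]]|ML]; last by exists p, q, d, e.
case: (pair_cover pq pL qL Lpq') => -[eq_p eq_q]; subst p' q'.
  by move: pqde'; rewrite pqde => -[-> ->].
move: pqde'; rewrite link_swap pqde => -[-> ->].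
suff -> : map (pair_fun p e' d') L = map (pair_fun q d' e') L by [].
apply/eq_in_map => z /Lpq; rewrite !inE /pair_fun => /orP[]/eqP->.
  by rewrite eqxx (negbTE pq).
by rewrite eqxx eq_sym (negbTE pq).
Qed.

Lemma srel_nseq_type s args x y : In (FAtom (ARel s args)) sf -> type_of x = type_of y ->
  srel M s (nseq (size args) x) <-> srel M s (nseq (size args) y).
Proof. by move=> atom_in /same_type_of/(_ _ atom_in); rewrite /= !map_asgxy_diag. Qed.

Lemma node_rel_nseq s args z : In (FAtom (ARel s args)) sf ->
  node_rel s (nseq (size args) z) <-> srel M s (nseq (size args) (origin z)).
Proof.
move=> atom_in; split=> [[p [q [d [e [pqde [Lpq ML]]]]]]|ML].
  have [n0|n_gt0] := posnP (size args); first by move: ML; rewrite n0.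
  have z_pq : z \in [:: p; q] by apply: Lpq; rewrite mem_nseq n_gt0 eqxx.
  have t_z : type_of (pair_fun p d e z) = type_of (origin z).
    have [tp tq] := link_types pqde; rewrite type_of_origin /pair_fun.
    by case: eqP => [->|/eqP zp] //; move: z_pq; rewrite !inE (negbTE zp) => /eqP ->.
  by rewrite map_nseq in ML; apply/(srel_nseq_type atom_in t_z).
exists z, z, (origin z), (origin z); split; first by rewrite /link eqxx.
split; first by move=> z'; rewrite mem_nseq !inE => /andP [_ ->].
by rewrite map_nseq /pair_fun eqxx.
Qed.

Lemma linked_type a b v : linked link a b -> type_of (b v) = type_of (origin (a v)).
Proof. by rewrite type_of_origin => /link_types []; case: v. Qed.

Lemma node_rel_transfer s args a b : In (FAtom (ARel s args)) sf -> linked link a b ->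
  node_rel s (map a args) <-> srel M s (map b args).
Proof.
move=> atom_in ab.
have const_case v : (forall v', In v' args -> a v' = a v /\ b v' = b v) ->
    node_rel s (map a args) <-> srel M s (map b args).
  move=> args_v; rewrite (map_const_In (fun v' v'_in => (args_v v' v'_in).1)).
  rewrite (map_const_In (fun v' v'_in => (args_v v' v'_in).2)) node_rel_nseq //.
  by rewrite (srel_nseq_type atom_in (linked_type v ab)).
have [a_eq|a_neq] := eqVneq (a VX) (a VY).
  move: ab; rewrite /linked -a_eq /link eqxx => -[bx by_].
  have b_eq : b VY = b VX by rewrite -by_ bx.
  by apply: (const_case VX) => -[] _; rewrite -?a_eq ?b_eq.
have [X_in|X_nin] := pselect (In VX args); last by apply: (const_case VY) => -[] // /X_nin.
have [Y_in|Y_nin] := pselect (In VY args); last by apply: (const_case VX) => -[] // /Y_nin.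
have args_sub := map_var_sub (f := a) (vs := args).
rewrite (node_rel_pair s a_neq (mem_map_In a X_in) (mem_map_In a Y_in) args_sub ab).
suff -> : map (pair_fun (a VX) (b VX) (b VY)) (map a args) = map b args by [].
by rewrite -map_comp; apply: eq_map => -[]; rewrite /= /pair_fun ?eqxx // eq_sym (negbTE a_neq).
Qed.

Lemma node_rel_linked s args a : In VX args -> In VY args ->
  node_rel s (map a args) -> exists b, linked link a b.
Proof.
move=> X_in Y_in [p [q [d [e [pqde [Lpq _]]]]]].
have [a_eq|a_neq] := eqVneq (a VX) (a VY).
  by exists (asgxy (origin (a VX)) (origin (a VX))); rewrite /linked -a_eq /link eqxx.
case: (pair_cover a_neq (mem_map_In a X_in) (mem_map_In a Y_in) Lpq) => -[pa qa].
  by exists (asgxy d e); rewrite /linked -pa -qa.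
by exists (asgxy e d); rewrite /linked -pa -qa link_swap pqde.
Qed.

Lemma realized_nclass u i : i < nsp -> realized (nclass u i).
Proof.
move=> lt_i; have /and3P [_ /allP real _] := admissible_label_of u.
by apply: real; rewrite mem_nth // size_tuple.
Qed.

Lemma witness_spec u j Q w g : In Q sf -> req_form j = Q -> qguard Q = Some (w, g) ->
  (exists e, qwitness M Q (origin u) e) -> qwitness M Q (anchor u j) (witness u j).
Proof.
move=> Q_in Qj Qg ex_e; rewrite /witness Qj; apply: epsilon_spec.
have Q_quant : qguard Q <> None by rewrite Qg.
have same : same_type M sf (origin u) (anchor u j).
  by apply: same_type_of; rewrite anchor_type type_of_origin.
exact: ((gholds_diag_qwitness Q_quant).1 (same Q Q_in)).1.
Qed.

Lemma link_witnessed u v : layer v = ordS (layer u) -> witnessed u v ->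
  link u v = Some (anchor u (request v), witness u (request v)).
Proof.
move=> lv wv; have uv : u != v by apply: contraPneq lv => <- /eqP; rewrite neq_ordS3.
by rewrite /link (negbTE uv) lv eqxx /layer_link wv.
Qed.

Lemma rel_witness_node u j Q w s args : In Q sf -> j < nsf -> req_form j = Q ->
  qguard Q = Some (w, GAtom (ARel s args)) -> In (FAtom (ARel s args)) sf ->
  (exists e, qwitness M Q (origin u) e) ->
  exists v d e, link u v = Some (d, e) /\ qwitness M Q d e /\ node_rel s (map (qasg w u v) args).
Proof.
move=> Q_in lt_j Qj Qg atom_in ex_e.
have W := witness_spec Q_in Qj Qg ex_e; set e := witness u j in W.
have [v vu lv] := exists_node_label u ord_max
  (const_label_admissible e (ordS (layer u)) (Ordinal lt_j)).
have lay_v : layer v = ordS (layer u) by rewrite /layer lv.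
have uv : u != v by apply: contraPneq lay_v => <- /eqP; rewrite neq_ordS3.
have no_class (i : 'I_nsp) : ~~ same_class i u v.
  apply: contra uv => /andP [/forallP uv_off _]; apply/eqP/ffunP => c.
  have [->|c_max] := eqVneq c ord_max; last by rewrite vu.
  by apply/eqP/(implyP (uv_off ord_max)); rewrite neq_ltn ltn_ord orbT.
have wv : witnessed u v.
  apply/asboolP; rewrite /request lv /= Qj; split=> // [|i]; first by rewrite /ntype lv.
  by rewrite (negbTE (no_class i)).
have uvae : link u v = Some (anchor u j, e) by rewrite (link_witnessed lay_v wv) /request lv.
exists v, (anchor u j), e; split=> //; split=> //.
exact/(node_rel_transfer atom_in (linked_qasg link_swap w uvae))/(qwitness_guard Qg W).
Qed.

Lemma class_label_admissible u (i : 'I_nsp) e lay j :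
  in_class i (nclass u i) (type_of e) e ->
  admissible (type_of e, lay, j, [tuple if i' == i then nclass u i else type_of e | i' < nsp]).
Proof.
move=> e_in; rewrite /admissible /= realized_type_of /=; apply/andP; split.
  apply/allP => t /mapP [i' _ ->]; case: ifP => _; last exact: realized_type_of.
  exact: realized_nclass.
apply/forallP => i'; rewrite tnth_mktuple; case: eqP => [->|_]; last exact: class_has_self.
by apply/asboolP; exists e.
Qed.

Lemma spec_witness_node u j Q w e0 x y : In Q sf -> j < nsf -> req_form j = Q ->
  qguard Q = Some (w, GSpec e0 x y) -> guard_has w (GSpec e0 x y) ->
  guard_has (other w) (GSpec e0 x y) -> (exists e, qwitness M Q (origin u) e) ->
  exists v d e, link u v = Some (d, e) /\ qwitness M Q d e /\ node_spec e0 u v.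
Proof.
move=> Q_in lt_j Qj Qg g_w g_o ex_e.
have e0_sp : e0 \in sp by apply: specs_subforms Q_in _ (qguard_specs Qg).
have lt_i : index e0 sp < nsp by rewrite index_mem.
set i := Ordinal lt_i; have sp_i : nth 0 sp i = e0 by exact: nth_index.
have W := witness_spec Q_in Qj Qg ex_e; set e := witness u j in W.
have anchor_u : anchor u j = class_rep i (nclass u i) (ntype u) by rewrite /anchor Qj Qg e0_sp.
have anchor_e : sspec M e0 (anchor u j) e.
  exact: (eval_spec_qasg M g_w g_o).1 (qwitness_guard Qg W).
have e_in : in_class i (nclass u i) (type_of e) e.
  have [rep_anchor _] := class_repP (class_has_nclass u lt_i).
  by split=> //; rewrite sp_i -anchor_u in rep_anchor *; apply: sspec_trans anchor_e.
have [v vu lv] := exists_node_label u (widen_ord (leqnSn nsp) i)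
  (class_label_admissible (ordS (layer u)) (Ordinal lt_j) e_in).
have lay_v : layer v = ordS (layer u) by rewrite /layer lv.
have uv : u != v by apply: contraPneq lay_v => <- /eqP; rewrite neq_ordS3.
have iuv : same_class i u v.
  apply/andP; split.
    by apply/forallP => c; apply/implyP => ci; rewrite vu.
  rewrite /nclass lv /= -[index e0 sp]/(nat_of_ord i).
  by rewrite (nth_map i) ?size_enum_ord // nth_ord_enum eqxx.
have wv : witnessed u v.
  apply/asboolP; rewrite /request lv /= Qj; split=> // [|i' i'uv]; first by rewrite /ntype lv.
  have -> : i' = i.
    by apply/val_inj/eqP; apply: contraNT uv => i'i; apply/eqP/(same_class_uniq i'i i'uv iuv).
  by rewrite sp_i.
exists v, (anchor u j), e; split; first by rewrite (link_witnessed lay_v wv) /request lv.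
by split=> //; rewrite /node_spec e0_sp.
Qed.

Lemma link_witness u Q w g : In Q sf -> qguard Q = Some (w, g) ->
  guard_eqfree g -> guard_has w g -> guard_has (other w) g -> incl (guard_subforms g) sf ->
  (exists e, qwitness M Q (origin u) e) ->
  exists v d e, link u v = Some (d, e) /\ qwitness M Q d e /\
    eval_guard node_structure (qasg w u v) g.
Proof.
move=> Q_in Qg g_eq g_w g_o g_sub ex_e.
have [j lt_j Qj] := In_nth_index phi Q_in.
case: g Qg g_eq g_w g_o g_sub => [[s args|//]|e0 x y] Qg _ g_w g_o g_sub.
  exact: rel_witness_node Q_in lt_j Qj Qg (g_sub _ (or_introl erefl)) ex_e.
have [v [d [e [uvde [W N]]]]] := spec_witness_node Q_in lt_j Qj Qg g_w g_o ex_e.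
by exists v, d, e; split=> //; split=> //; apply/(eval_spec_qasg _ g_w g_o).
Qed.

Lemma type_realized d : exists u, same_type M sf (origin u) d.
Proof.
pose u0 : node := [ffun _ => Ordinal nlabels_gt0].
have [v _ lv] := exists_node_label u0 ord0
  (const_label_admissible d ord0 (Ordinal (size_subforms_gt0 phi))).
by exists v; apply: same_type_of; rewrite type_of_origin /ntype lv.
Qed.

Lemma link_refl u : link u u = Some (origin u, origin u).
Proof. by rewrite /link eqxx. Qed.

Lemma link_same_type u v d e : link u v = Some (d, e) ->
  same_type M sf d (origin u) /\ same_type M sf e (origin v).
Proof. by case/link_types => du ev; split; apply: same_type_of; rewrite type_of_origin. Qed.

Theorem gholds_node_structure a : guarded phi -> eqfree phi -> (forall v, ~ fv phi v) ->
  gholds M a phi -> exists b, gholds node_structure b phi.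
Proof.
move=> phi_g phi_eq phi_closed Ma.
pose u0 : node := [ffun _ => Ordinal nlabels_gt0].
exists (asgxy u0 u0).
apply/(gholds_transfer (N := node_structure) link_refl link_same_type link_swap
  node_rel_transfer node_rel_linked link_spec link_witness type_realized
  phi_g phi_eq (incl_refl _) (linked_diag link_refl u0)).
have agree v : fv phi v -> a v = asgxy (origin u0) (origin u0) v by move/phi_closed.
by apply (gholds_coinc M agree).
Qed.

Lemma card_node : #|{: node}| <= 2 ^ ((flen phi + 2) ^ 3).
Proof.
rewrite card_ffun !card_ord.
apply: leq_trans (label_count_bound (size_subforms phi) (size_specs phi)).
rewrite leq_exp2r // /nlabels card_sig; apply: leq_trans (max_card _) _.
by rewrite !card_prod card_tuple card_ffun card_bool !card_ord.
Qed.

End SmallModel.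

Lemma horner_cube (x : nat) : ((('X + 2%:P) ^+ 3 : {poly nat}).[x])%R = (x + 2) ^ 3.
Proof. by rewrite horner_exp hornerD hornerX hornerC -natrXE. Qed.

Theorem theorem1 :
  exists p : {poly nat},
    forall phi : gform,
      gsentence phi -> eqfree phi -> satisfiable phi ->
      exists n : nat, n <= 2 ^ (p.[flen phi])%R /\ has_model_of_size phi n.
Proof.
exists (('X + 2%:P) ^+ 3)%R => phi [phi_g phi_closed] phi_eq [D [M [a Ma]]].
have [b Nb] := gholds_node_structure (a VX) phi_g phi_eq phi_closed Ma.
exists #|{: node M (a VX) phi}|; split; last exact: has_model_of_size_card Nb.
by rewrite horner_cube; apply: card_node.
Qed.
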